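(* Let $G$ be an $\alpha_i$-metric graph ($i\ge 0$ an integer). Then for every vertex $v\in V\setminus C(G)$, $loc(v)\le i+1$.
   Context: All graphs $G=(V,E)$ are finite, connected, unweighted, undirected, simple; $d(u,v)$ is the shortest-path distance. $I(u,v)=\{x: d(u,x)+d(x,v)=d(u,v)\}$. A graph is $\alpha_i$-metric if for all vertices $u,v,w,x$: whenever $v\in I(u,w)$, $w\in I(v,x)$ and $v,w$ are adjacent, then $d(u,x)\ge d(u,v)+d(v,x)-i$. $e(v)=\max_u d(u,v)$, $rad(G)=\min_v e(v)$, $C(G)=\{v:e(v)=rad(G)\}$. For $v\notin C(G)$, the locality is $loc(v)=\min\{d(v,x): x\in V,\ e(x)<e(v)\}$. *)

From mathcomp Require Import all_boot.
Set Implicit Arguments. Unset Strict Implicit. Unset Printing Implicit Defensive.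

Definition simple_graph (T : finType) (e : rel T) : Prop :=
  symmetric e /\ irreflexive e.

Definition connected_graph (T : finType) (e : rel T) : Prop :=
  forall x y : T, connect e x y.

Fixpoint ball (T : finType) (e : rel T) (x : T) (n : nat) : {set T} :=
  match n with
  | 0 => [set x]
  | n'.+1 => ball e x n' :|: [set z | [exists w in ball e x n', e w z]]
  end.

(* shortest-path distance: least n < #|T| with y in ball x n
   (for connected graphs such n exists) *)
Definition dist (T : finType) (e : rel T) (x y : T) : nat :=
  find (fun n => y \in ball e x n) (iota 0 #|T|).

Definition interval (T : finType) (e : rel T) (u v : T) : {set T} :=
  [set x | dist e u x + dist e x v == dist e u v].

Definition alpha_metric (T : finType) (e : rel T) (i : nat) : Prop :=
  forall u v w x : T,
    v \in interval e u w -> w \in interval e v x -> e v w ->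
    dist e u v + dist e v x <= dist e u x + i.

Definition ecc (T : finType) (e : rel T) (v : T) : nat :=
  \max_(u : T) dist e u v.

(* rad(G); the default v0 only serves as neutral start and does not affect the value *)
Definition rad (T : finType) (e : rel T) (v0 : T) : nat :=
  \big[minn/ecc e v0]_(w : T) ecc e w.

Definition center (T : finType) (e : rel T) : {set T} :=
  [set v | ecc e v == rad e v].

(* locality; #|T| is a default that is never used when v is not central *)
Definition loc (T : finType) (e : rel T) (v : T) : nat :=
  \big[minn/#|T|]_(x | ecc e x < ecc e v) dist e v x.

From mathcomp Require Import all_boot all_order zify.
Set Implicit Arguments. Unset Strict Implicit.
Import Order.TTheory.

(* Take x closest to v among the vertices of smaller eccentricity, and let y
   be the neighbour of x on a shortest path from v.  By the choice of x,
   ecc y >= ecc v > ecc x, so a vertex u farthest from y satisfies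
   x \in I(u, y); also y \in I(x, v).  The alpha_i condition for u, x, y, v
   gives d(u,x) + d(x,v) <= d(u,v) + i, and since
   d(u,v) <= ecc v <= d(u,y) = d(u,x) + 1 this forces d(v,y) <= i. *)

Section GraphDistance.
Variables (T : finType) (e : rel T).
Hypothesis e_sym : symmetric e.
Hypothesis e_irr : irreflexive e.
Hypothesis e_conn : connected_graph e.

Lemma ball_mono x : {homo ball e x : n m / n <= m >-> n \subset m}.
Proof.
move=> n; elim=> [|m IHm]; first by rewrite leqn0 => /eqP ->.
rewrite leq_eqVlt => /orP [/eqP -> // | /IHm sub_nm].
exact: subset_trans sub_nm (subsetUl _ _).
Qed.

Lemma ball_edgeL x y z n : e x y -> z \in ball e y n -> z \in ball e x n.+1.
Proof.
move=> exy; elim: n z => [|n IHn] z /=.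
  by rewrite in_set1 => /eqP ->; rewrite !inE; apply/orP; right;
     apply/existsP; exists x; rewrite inE eqxx.
rewrite in_setU => /orP [/IHn zx | ].
  by rewrite in_setU zx.
rewrite inE => /existsP [w /andP [/IHn wx ewz]].
by rewrite in_setU inE; apply/orP; right; apply/existsP; exists w; rewrite wx.
Qed.

Lemma ball_sym x y n : y \in ball e x n -> x \in ball e y n.
Proof.
elim: n y => [|n IHn] y /=; first by rewrite !in_set1 eq_sym.
rewrite in_setU => /orP [/IHn yx | ].
  by rewrite in_setU yx.
by rewrite inE => /existsP [w /andP [/IHn wx ewy]]; apply: ball_edgeL wx; rewrite e_sym.
Qed.

Lemma path_last_ball x p : path e x p -> last x p \in ball e x (size p).
Proof.
elim: p x => [|y p IHp] x /=; first by rewrite in_set1.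
by move=> /andP [exy /IHp]; apply: ball_edgeL.
Qed.

Lemma exists_ball_lt_card x y : exists2 n, n < #|T| & y \in ball e x n.
Proof.
have /connectP [p p_path ->] := e_conn x y.
have [q q_path q_uniq _] := shortenP p_path.
exists (size q); last exact: path_last_ball.
by have := max_card (mem (x :: q)); rewrite (card_uniqP q_uniq).
Qed.

Lemma has_ball x y : has (fun n => y \in ball e x n) (iota 0 #|T|).
Proof.
by have [n n_lt y_n] := exists_ball_lt_card x y; apply/hasP; exists n; rewrite ?mem_iota.
Qed.

Lemma dist_lt_card x y : dist e x y < #|T|.
Proof. by rewrite /dist -[X in _ < X](size_iota 0) -has_find has_ball. Qed.

Lemma ball_dist x y : y \in ball e x (dist e x y).
Proof. by have := nth_find 0 (has_ball x y); rewrite nth_iota ?add0n ?dist_lt_card. Qed.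

Lemma mem_ball x y n : (y \in ball e x n) = (dist e x y <= n).
Proof.
apply/idP/idP => [y_n | le_dn]; last exact: subsetP (ball_mono x le_dn) _ (ball_dist x y).
have [le_card | lt_card] := leqP #|T| n.
  exact: ltnW (leq_trans (dist_lt_card x y) le_card).
rewrite leqNgt; apply/negP => lt_nd.
by have := before_find 0 lt_nd; rewrite nth_iota ?size_iota // add0n y_n.
Qed.

Lemma dist_sym x y : dist e x y = dist e y x.
Proof.
by apply/eqP; rewrite eqn_leq -!mem_ball; apply/andP; split; apply: ball_sym; apply: ball_dist.
Qed.

Lemma dist_eq0 x y : (dist e x y == 0) = (x == y).
Proof. by rewrite -leqn0 -mem_ball in_set1 eq_sym. Qed.

Lemma dist_edge x y : e x y -> dist e x y = 1.
Proof.
move=> exy; apply/eqP; rewrite eqn_leq -mem_ball (ball_edgeL exy) ?in_set1 //=.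
by rewrite lt0n dist_eq0; apply: contraTneq exy => ->; rewrite e_irr.
Qed.

Lemma dist_edgeS u x y : e x y -> dist e u y <= (dist e u x).+1.
Proof.
move=> exy; rewrite -mem_ball /= in_setU inE; apply/orP; right.
by apply/existsP; exists x; rewrite exy ball_dist.
Qed.

Lemma dist_pred v x l : dist e v x = l.+1 -> exists2 y, e y x & dist e v y = l.
Proof.
move=> d_vx; have := ball_dist v x; rewrite d_vx /= in_setU mem_ball d_vx ltnn /=.
rewrite inE => /existsP [y /andP [y_l eyx]]; exists y => //.
by have := dist_edgeS v eyx; rewrite mem_ball in y_l; lia.
Qed.

Lemma dist_ecc u v : dist e u v <= ecc e v.
Proof. exact: (leq_bigmax u). Qed.

Lemma ecc_attained v : exists u, dist e u v = ecc e v.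
Proof.
rewrite /ecc; have [|u ->] := bigop.eq_bigmax (fun u => dist e u v); last by exists u.
by apply/card_gt0P; exists v.
Qed.

End GraphDistance.

Lemma not_center_ecc_lt (T : finType) (e : rel T) v :
  v \notin center e -> exists w, ecc e w < ecc e v.
Proof.
move=> v_nc; apply/existsP; apply: contraR v_nc => /existsPn ecc_min.
rewrite inE /rad -minEnat eq_le bigmin_le_id andbT; apply/bigmin_geP; split => // w _.
by rewrite leNgt ecc_min.
Qed.

Lemma loc_le_dist (T : finType) (e : rel T) v x :
  ecc e x < ecc e v -> loc e v <= dist e v x.
Proof. by move=> lt_xv; rewrite /loc -minEnat; exact: (bigmin_le_cond (T := nat)). Qed.

Lemma alpha_metric_ecc_step (T : finType) (e : rel T) i v x y :
  simple_graph e -> connected_graph e -> alpha_metric e i ->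
  e x y -> dist e v x = (dist e v y).+1 ->
  ecc e x < ecc e y -> ecc e v <= ecc e y -> dist e v y <= i.
Proof.
move=> [e_sym e_irr] e_conn alpha exy d_vx lt_xy le_vy.
have [u d_uy] := ecc_attained e y.
have le_uy := dist_edgeS e_conn u exy.
have le_ux := dist_ecc e u x.
have le_uv := dist_ecc e u v.
have d_xy := dist_edge e_irr e_conn exy.
have x_uy : x \in interval e u y.
  by rewrite inE d_xy; apply/eqP; lia.
have y_xv : y \in interval e x v.
  by rewrite inE d_xy !(dist_sym e_sym e_conn _ v) d_vx add1n.
have := alpha u x y v x_uy y_xv exy.
rewrite (dist_sym e_sym e_conn x v) d_vx; lia.
Qed.

Theorem lemma7 (T : finType) (e : rel T) (i : nat) :
  simple_graph e -> connected_graph e -> alpha_metric e i ->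
  forall v : T, v \notin center e -> loc e v <= i.+1.
Proof.
move=> graph_e e_conn alpha v v_nc.
have [w lt_wv] := not_center_ecc_lt v_nc.
case: (arg_minnP (P := fun x => ecc e x < ecc e v) (dist e v) lt_wv) => x lt_xv x_min.
apply: leq_trans (loc_le_dist lt_xv) _.
case d_vx: (dist e v x) => [|l] //.
have [y eyx d_vy] := dist_pred e_conn d_vx.
have le_vy : ecc e v <= ecc e y.
  by rewrite leqNgt; apply/negP => /x_min; rewrite d_vx d_vy ltnn.
rewrite ltnS -d_vy; apply: (alpha_metric_ecc_step (x := x) graph_e e_conn alpha) => //.
- by rewrite graph_e.1.
- by rewrite d_vx d_vy.
- exact: leq_trans lt_xv le_vy.
Qed.
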